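(* Let $p$ be a positive integer and $d$ a positive integer. Then, as formal power series, $T_d(x)=H_p(x)^d$.
   Context: A monotonic lattice path is a sequence of lattice points $P_0P_1\ldots P_l$ with $P_{i+1}-P_i\in\{(1,0),(0,1)\}$. Fix a positive integer $p$. For integers $n\ge0$, $d>0$, $T(n,d)$ is the number of monotonic lattice paths from $(0,0)$ to $(n,pn+d)$ all of whose points other than the first and last lie strictly below the line $y=px+d$ (with $T(0,d)=1$), and $T_d(x)=\sum_{n\ge0}T(n,d)x^n$. $M(p,n)=\frac{1}{pn+n+1}\binom{pn+n+1}{n}$ (the number of monotonic lattice paths from $(0,0)$ to $(n,pn)$ with no point strictly above $y=px$) and $H_p(x)=\sum_{n\ge0}M(p,n)x^n$. *)

From HB Require Import structures.
From mathcomp Require Import all_boot all_order all_algebra.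
Set Implicit Arguments. Unset Strict Implicit. Unset Printing Implicit Defensive.
Import Order.TTheory GRing.Theory Num.Theory.

(* A monotonic lattice path from (0,0) is encoded by its step sequence
   s : seq bool, true = step (1,0), false = step (0,1).
   The point P_i (i steps in) has coordinates (px s i, py s i). *)
Definition px (s : seq bool) (i : nat) : nat := count id (take i s).
Definition py (s : seq bool) (i : nat) : nat := count negb (take i s).

(* Paths from (0,0) to (n, p*n+d): step sequences of length n + (p*n+d)
   with exactly n right steps.  Condition: every point P_i with 0 < i < l
   lies strictly below the line y = p x + d. *)
Definition Tpath (p n d : nat) (s : seq bool) : bool :=
  (count id s == n) &&
  all (fun i => py s i < p * px s i + d) (iota 1 (size s).-1).

(* T(n,d) : number of such paths (for n = 0 this evaluates to 1, the
   paper's convention). *)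
Definition T (p n d : nat) : nat :=
  #|[set s : (n + (p * n + d)).-tuple bool | Tpath p n d s]|.

Definition M (p n : nat) : nat := 'C(p * n + n + 1, n) %/ (p * n + n + 1).

(* Truncation of H_p(x) to degree < N.+1 (as a polynomial over int);
   coefficients of degree <= N of H_p(x)^d agree with those of
   (Htrunc p N)^d. *)
Definition Htrunc (p N : nat) : {poly int} := \poly_(i < N.+1) Posz (M p i).

From HB Require Import structures.
From mathcomp Require Import all_boot all_algebra zify.
Import GRing.Theory.
Set Implicit Arguments. Unset Strict Implicit. Unset Printing Implicit Defensive.

(* Splitting a path according to its first step gives
     T(0, d) = 1,
     T(n+1, 1)   = T(n, p+1)                   (an up step would touch the line),
     T(n+1, d+2) = T(n+1, d+1) + T(n, d+2+p)   (first step up, resp. right).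
   These recurrences determine T; solving them by the ballot-type closed form
   T(n, e+1) = C(pn+n+e, n) - p C(pn+n+e, n-1) yields T(n, 1) = M(p, n).

   Write h(d, n) for the n-th coefficient of H_p^d.  If the
   Fuss-Catalan equation M(p, i+1) = h(p+1, i) is known for i <= k, expanding
   H^(e+2) = H * H^(e+1) shows h(e+2, k+1) = h(e+1, k+1) + h(e+2+p, k), the
   same recurrence as T.  A joint induction on n (where the Fuss-Catalan
   equation itself comes from T(i+1, 1) = T(i, p+1)) then shows that any
   function with the recurrences of T and the values T(n, 1) = M(p, n) equals
   h on d > 0, which proves the theorem. *)

Definition card_seqs (L : nat) (P : pred (seq bool)) : nat :=
  #|[set t : L.-tuple bool | P t]|.

Lemma eq_card_seqs L (P Q : pred (seq bool)) :
  P =1 Q -> card_seqs L P = card_seqs L Q.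
Proof. by move=> eqPQ; apply: eq_card => t; rewrite !inE eqPQ. Qed.

Lemma card_seqs_pred0 L (P : pred (seq bool)) : P =1 pred0 -> card_seqs L P = 0.
Proof. by move=> P0; apply: eq_card0 => t; rewrite !inE P0. Qed.

Lemma card_seqs_nil (P : pred (seq bool)) : card_seqs 0 P = P [::].
Proof.
rewrite /card_seqs; have [HP | nHP] := boolP (P [::]).
  rewrite (eq_card (B := [set: 0.-tuple bool])) ?cardsT ?card_tuple //.
  by move=> t; rewrite !inE (tuple0 t).
by apply: eq_card0 => t; rewrite !inE (tuple0 t) (negbTE nHP).
Qed.

Lemma card_seqs_head L (P : pred (seq bool)) (b : bool) :
  #|[set t : L.+1.-tuple bool | P t & thead t == b]| =
  card_seqs L (fun s => P (b :: s)).
Proof.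
have cons_inj : injective (fun t : L.-tuple bool => [tuple of b :: t]).
  by move=> t1 t2 /(congr1 val) [] /val_inj.
rewrite /card_seqs -(card_imset _ cons_inj); apply: eq_card => t; case/tupleP: t => c t.
rewrite !inE theadE; have [-> | neq_cb] := eqVneq c b.
  by rewrite (mem_imset _ _ cons_inj) inE andbT.
rewrite andbF; apply/esym/imsetP => -[t' _] /(congr1 val) [eq_cb _].
by rewrite eq_cb eqxx in neq_cb.
Qed.

Lemma card_seqsS L (P : pred (seq bool)) :
  card_seqs L.+1 P =
  card_seqs L (fun s => P (true :: s)) + card_seqs L (fun s => P (false :: s)).
Proof.
rewrite -!card_seqs_head /card_seqs.
rewrite -(cardsID [set t : L.+1.-tuple bool | thead t]
  [set t : L.+1.-tuple bool | P t]).
congr (_ + _).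
  by apply: eq_card => t; rewrite !inE eqb_id andbC.
by apply: eq_card => t; rewrite !inE eqbF_neg andbC.
Qed.

Lemma pxS b s i : px (b :: s) i.+1 = b + px s i.
Proof. by []. Qed.

Lemma pyS b s i : py (b :: s) i.+1 = ~~ b + py s i.
Proof. by []. Qed.

Lemma iota2 k : iota 2 k = map S (iota 1 k).
Proof. by rewrite (iotaDl 1 1); apply: eq_map => i; rewrite add1n. Qed.

Lemma Tpath_right p n d s :
  0 < p -> Tpath p n.+1 d (true :: s) = Tpath p n (d + p) s.
Proof.
move=> p_gt0; rewrite /Tpath /= eqSS; congr (_ && _); case: s => [//|b s] /=.
have -> : py [:: true, b & s] 1 < p * px [:: true, b & s] 1 + d.
  by rewrite /py /px /=; lia.
rewrite iota2 all_map; apply: eq_all => i /=.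
by rewrite pxS pyS /=; congr (_ < _); lia.
Qed.

Lemma Tpath_up p n d s : 0 < d -> Tpath p n d.+1 (false :: s) = Tpath p n d s.
Proof.
move=> d_gt0; rewrite /Tpath /=; congr (_ && _); case: s => [//|b s] /=.
have -> : py [:: false, b & s] 1 < p * px [:: false, b & s] 1 + d.+1.
  by rewrite /py /px /=; lia.
rewrite iota2 all_map; apply: eq_all => i /=.
by rewrite pxS pyS /= add1n addnS ltnS.
Qed.

Lemma Tpath_up_touch p n b s : Tpath p n 1 [:: false, b & s] = false.
Proof. by rewrite /Tpath /= /py /px /= muln0 ltnn andbF. Qed.

Lemma T_card_seqs p n d : T p n d = card_seqs (n + (p * n + d)) (Tpath p n d).
Proof. by []. Qed.

(* With no right step left, the only admissible path goes straight up. *)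
Lemma T0 p d : T p 0 d.+1 = 1.
Proof.
elim: d => [|d IHd]; first by rewrite T_card_seqs muln0 card_seqsS !card_seqs_nil.
rewrite T_card_seqs muln0 !add0n card_seqsS card_seqs_pred0 //.
by rewrite -IHd T_card_seqs muln0 !add0n; apply: eq_card_seqs => s; rewrite Tpath_up.
Qed.

(* Starting on the line, the first step must go right. *)
Lemma T_at_line p n : 0 < p -> T p n.+1 1 = T p n p.+1.
Proof.
move=> p_gt0; rewrite T_card_seqs.
have -> : n.+1 + (p * n.+1 + 1) = (n + (p * n + p)).+2 by lia.
rewrite card_seqsS [X in _ + X]card_seqsS.
rewrite !(@card_seqs_pred0 _ (fun s => Tpath p n.+1 1 [:: false, _ & s])) => [|s|s];
  rewrite ?Tpath_up_touch // !addn0 T_card_seqs.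
have -> : n + (p * n + p.+1) = (n + (p * n + p)).+1 by lia.
by apply: eq_card_seqs => s; rewrite Tpath_right // add1n.
Qed.

Lemma T_above_line p n d : 0 < p ->
  T p n.+1 d.+2 = T p n.+1 d.+1 + T p n (d.+2 + p).
Proof.
move=> p_gt0; rewrite T_card_seqs.
have -> : n.+1 + (p * n.+1 + d.+2) = (n + (p * n + (d.+2 + p))).+1 by lia.
rewrite card_seqsS addnC; congr (_ + _).
  have -> : n + (p * n + (d.+2 + p)) = n.+1 + (p * n.+1 + d.+1) by lia.
  by apply: eq_card_seqs => s; rewrite Tpath_up.
by apply: eq_card_seqs => s; rewrite Tpath_right.
Qed.

Local Open Scope ring_scope.

Definition ballot (p n e : nat) : int :=
  if n is k.+1 then ('C(p * n + n + e, n))%:Z - (p * 'C(p * n + n + e, k))%:Z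
  else 1.

(* The closed form satisfies the recurrence of T above the line (Pascal). *)
Lemma ballot_above_line p k e :
  ballot p k.+1 e.+1 = ballot p k.+1 e + ballot p k (e.+1 + p).
Proof.
case: k => [|j].
  by rewrite /ballot !bin1 !bin0 !muln1; lia.
rewrite /ballot; set N := (p * j.+2 + j.+2 + e)%N.
have -> : (p * j.+2 + j.+2 + e.+1 = N.+1)%N by rewrite /N; lia.
have -> : (p * j.+1 + j.+1 + (e.+1 + p) = N)%N by rewrite /N; lia.
by rewrite (binS N j.+1) (binS N j) mulnDr !PoszD opprD addrACA.
Qed.

(* ... and on the line, using C(N, k+1) = p C(N, k) for N = p(k+1) + k. *)
Lemma ballot_at_line p k : ballot p k.+1 0 = ballot p k p.
Proof.
case: k => [|j].
  by rewrite /ballot !bin1 !bin0 !muln1; lia.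
rewrite /ballot; set N := (p * j.+2 + j.+1)%N.
have -> : (p * j.+2 + j.+2 + 0 = N.+1)%N by rewrite /N; lia.
have -> : (p * j.+1 + j.+1 + p = N)%N by rewrite /N; lia.
have binN : 'C(N, j.+2) = (p * 'C(N, j.+1))%N.
  apply/eqP; rewrite -(eqn_pmul2l (ltn0Sn j.+1)) mul_bin_left.
  have -> : (N - j.+1 = p * j.+2)%N by rewrite /N; lia.
  by rewrite mulnCA mulnA.
by rewrite (binS N j.+1) (binS N j) binN mulnDr !PoszD (addrC (Posz (p * _))) addrKA.
Qed.

Lemma ballot_M p n : ballot p n 0 = Posz (M p n).
Proof.
case: n => [|k]; first by rewrite /ballot /M muln0 bin0 divn1.
rewrite /ballot /M addn0; set K := k.+1; set m := (p * K + K)%N.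
set a := 'C(m, K); set b := 'C(m, k).
have Ka : (K * a = (p * K + 1) * b)%N.
  by rewrite /a /K mul_bin_left; congr (_ * _)%N; rewrite /m /K; lia.
have pb_le_a : (p * b <= a)%N.
  rewrite -(leq_pmul2l (ltn0Sn k)) -/K Ka mulnA (mulnC K p).
  by apply: leq_mul => //; rewrite addn1.
have Kdiff : (K * (a - p * b) = b)%N.
  by rewrite mulnBr Ka mulnDl mul1n mulnA (mulnC K p) addKn.
have binSm : ('C(m.+1, K) = m.+1 * (a - p * b))%N.
  apply/eqP; rewrite -(eqn_pmul2l (ltn0Sn k)) -/K.
  rewrite /K (binS m k) -/K -/a -/b mulnDr Ka mulnCA Kdiff -mulnDl.
  by apply/eqP; congr (_ * _)%N; rewrite /m; lia.
by rewrite addn1 binSm mulKn // subzn.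
Qed.

Lemma T_ballot p : (0 < p)%N -> forall n e, Posz (T p n e.+1) = ballot p n e.
Proof.
move=> p_gt0; elim=> [|k IHk] e; first by rewrite T0.
elim: e => [|e IHe]; first by rewrite T_at_line // IHk ballot_at_line.
by rewrite T_above_line // PoszD IHe addSn IHk ballot_above_line.
Qed.

Lemma T_one p n : (0 < p)%N -> Posz (T p n 1) = Posz (M p n).
Proof. by move=> p_gt0; rewrite T_ballot // ballot_M. Qed.

Lemma coef_expr_low (R : nzRingType) (P Q : {poly R}) m :
  (forall j, (j <= m)%N -> P`_j = Q`_j) ->
  forall d j, (j <= m)%N -> (P ^+ d)`_j = (Q ^+ d)`_j.
Proof.
move=> eqPQ; elim=> [|d IHd] j le_jm; first by rewrite !expr0.
rewrite !exprS !coefM; apply: eq_bigr => i _.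
have le_ij : (i <= j)%N by rewrite -ltnS.
by rewrite eqPQ ?(leq_trans le_ij) // IHd // (leq_trans (leq_subr i j)).
Qed.

Lemma coef_Htrunc p N j : (j <= N)%N -> (Htrunc p N)`_j = Posz (M p j).
Proof. by rewrite /Htrunc coef_poly ltnS => ->. Qed.

Lemma M0 p : M p 0 = 1%N.
Proof. by rewrite /M muln0 bin0 divn1. Qed.

Definition hcoef (p d n : nat) : int := (Htrunc p n ^+ d)`_n.

Lemma hcoef_trunc p N d n : (n <= N)%N -> (Htrunc p N ^+ d)`_n = hcoef p d n.
Proof.
move=> le_nN; apply: (coef_expr_low (m := n)) => // j le_jn.
by rewrite !coef_Htrunc // (leq_trans le_jn).
Qed.

Lemma hcoef0 p d : hcoef p d 0 = 1.
Proof.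
rewrite /hcoef; elim: d => [|d IHd]; first by rewrite expr0 coefC.
by rewrite exprS coef0M IHd coef_Htrunc // M0 mulr1.
Qed.

Lemma hcoef1 p n : hcoef p 1 n = Posz (M p n).
Proof. by rewrite /hcoef expr1 coef_Htrunc. Qed.

Lemma hcoef_above_line p k e :
  (forall i, (i <= k)%N -> Posz (M p i.+1) = hcoef p p.+1 i) ->
  hcoef p e.+2 k.+1 = hcoef p e.+1 k.+1 + hcoef p (e.+2 + p) k.
Proof.
move=> fuss_catalan.
rewrite [in LHS]/hcoef exprS coefM big_ord_recl coef_Htrunc // M0 mul1r subn0.
congr (_ + _); have -> : (e.+2 + p = p.+1 + e.+1)%N by lia.
rewrite /hcoef exprD coefM; apply: eq_bigr => i _.
have le_ik : (i <= k)%N by rewrite -ltnS.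
by rewrite lift0 subSS coef_Htrunc // fuss_catalan // !hcoef_trunc //; lia.
Qed.

Lemma hcoef_unique p (f : nat -> nat -> int) :
  (forall d, f 0%N d.+1 = 1) ->
  (forall n, f n 1%N = Posz (M p n)) ->
  (forall n, f n.+1 1%N = f n p.+1) ->
  (forall n d, f n.+1 d.+2 = f n.+1 d.+1 + f n (d.+2 + p)%N) ->
  forall n d, (0 < d)%N -> f n d = hcoef p d n.
Proof.
move=> f_n0 f_d1 f_line f_above n; elim/ltn_ind: n => -[|k] IHn [//|d] _.
  by rewrite f_n0 hcoef0.
elim: d => [|e IHe]; first by rewrite f_d1 hcoef1.
have fuss_catalan i : (i <= k)%N -> Posz (M p i.+1) = hcoef p p.+1 i.
  by move=> le_ik; rewrite -f_d1 f_line IHn.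
by rewrite f_above IHe IHn // hcoef_above_line.
Qed.

Theorem mainTheorem8 (p d : nat) (hp : (0 < p)%N) (hd : (0 < d)%N) :
  forall n : nat, Posz (T p n d) = (Htrunc p n ^+ d)`_n.
Proof.
move=> n; apply: (hcoef_unique (f := fun n d => Posz (T p n d))) => //.
- by move=> e; rewrite T0.
- by move=> m; rewrite T_one.
- by move=> m; rewrite T_at_line.
- by move=> m e; rewrite T_above_line // PoszD.
Qed.
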